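(* Let $A,B$ be finite-dimensional Hilbert spaces, $\rho$ a density matrix on $A\otimes B$, and $|\phi\rangle\in A\otimes B$ a pure state of Schmidt rank at most $r$. Let $W\subseteq A$ be a subspace with orthogonal projection $\Pi_W$ such that $\|(I-\Pi_W)\,\mathrm{tr}_B(\rho)\,(I-\Pi_W)\|_\infty\le\eta$. Then \[ \big|\langle\phi|(\Pi_W\otimes I)\rho(\Pi_W\otimes I)|\phi\rangle-\langle\phi|\rho|\phi\rangle\big|\le 2r\sqrt\eta. \]
   Context: $\|\cdot\|_\infty$ is the operator norm; the Schmidt rank of $|\phi\rangle$ is the rank of its Schmidt decomposition with respect to the bipartition $A\otimes B$. *)

(* finite-dimensional Hilbert spaces A = C^m, B = C^n over
   an arbitrary numClosedFieldType C (e.g. complex R for R : realType, or C); A (x) B = C^(m*n) via mxtens. *)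
From HB Require Import structures.
From mathcomp Require Import all_boot all_order all_algebra all_field.
From mathcomp Require Import mxtens.
Set Implicit Arguments. Unset Strict Implicit. Unset Printing Implicit Defensive.
Import Order.TTheory GRing.Theory Num.Theory.
Local Open Scope ring_scope.

Section QDefs.
Variable C : numClosedFieldType.

Definition adj {m n : nat} (M : 'M[C]_(m, n)) : 'M[C]_(n, m) :=
  (map_mx (fun z : C => z^*) M)^T.

Definition dotv {m : nat} (u v : 'cV[C]_m) : C := (adj u *m v) 0 0.

Definition vnorm {m : nat} (u : 'cV[C]_m) : C := sqrtC (dotv u u).

Definition expect {m : nat} (phi : 'cV[C]_m) (X : 'M[C]_m) : C :=
  dotv phi (X *m phi).

Definition is_density {m : nat} (rho : 'M[C]_m) : Prop :=
  [/\ adj rho = rho, (forall x : 'cV[C]_m, 0 <= dotv x (rho *m x))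
    & \tr rho = 1].

Definition is_pure_state {m : nat} (phi : 'cV[C]_m) : Prop := dotv phi phi = 1.

Definition orthonormal_family {m s : nat} (u : 'I_s -> 'cV[C]_m) : Prop :=
  forall i j, dotv (u i) (u j) = (i == j)%:R.

Definition schmidt_rank_le {m n : nat} (phi : 'cV[C]_(m * n)) (r : nat) : Prop :=
  exists s : nat, (s <= r)%N /\
  exists (lam : 'I_s -> C) (u : 'I_s -> 'cV[C]_m) (v : 'I_s -> 'cV[C]_n),
    [/\ forall k, 0 < lam k, orthonormal_family u, orthonormal_family v &
        phi = \sum_(k < s) lam k *: (u k *t v k)].

(* orthogonal projection (onto its range W) *)
Definition is_orth_proj {m : nat} (P : 'M[C]_m) : Prop :=
  P *m P = P /\ adj P = P.

Definition ptraceB {m n : nat} (rho : 'M[C]_(m * n)) : 'M[C]_m :=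
  \matrix_(i, j) \sum_(k < n) rho (mxtens_index (i, k)) (mxtens_index (j, k)).

(* ||X||_oo <= eta  (operator norm: sup of ||X x|| over ||x|| <= 1) *)
Definition opnorm_le {m : nat} (X : 'M[C]_m) (eta : C) : Prop :=
  forall x : 'cV[C]_m, vnorm (X *m x) <= eta * vnorm x.

End QDefs.

(* Put a = (P (x) I) phi and b = phi - a = ((I - P) (x) I) phi.  Then
   <a|rho|a> - <phi|rho|phi> = -(<a|rho|b> + <b|rho|phi>), and Cauchy--Schwarz
   for the positive semidefinite form <.|rho|.> bounds both cross terms by
   sqrt <b|rho|b>, since <a|rho|a> and <phi|rho|phi> are at most tr rho = 1.
   The Schmidt decomposition gives b = sum_k lam_k w_k with
   w_k = (I - P) u_k (x) v_k and sum_k lam_k^2 = 1, and the inequality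
   <x|M|x> <= tr M <x|x>, applied to the Gram matrix of the w_k, yields
   <b|rho|b> <= sum_k <w_k|rho|w_k>.  Each of these s <= r terms is at most
   <(I - P) u_k| tr_B rho |(I - P) u_k> <= eta. *)

From HB Require Import structures.
From mathcomp Require Import all_boot all_order all_algebra all_field.
From mathcomp Require Import mxtens.
From mathcomp Require Import ring.
Import Order.TTheory GRing.Theory Num.Theory.
Local Open Scope ring_scope.
Set Implicit Arguments. Unset Strict Implicit. Unset Printing Implicit Defensive.

Section Adjoint.
Variable C : numClosedFieldType.

Lemma dotvE m (x y : 'cV[C]_m) : dotv x y = \sum_i (x i 0)^* * y i 0.
Proof. by rewrite /dotv /adj !mxE; apply: eq_bigr => i _; rewrite !mxE. Qed.

Lemma adjE m n (A : 'M[C]_(m, n)) i j : adj A i j = (A j i)^*.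
Proof. by rewrite /adj !mxE. Qed.

Lemma dotv_conj m (x y : 'cV[C]_m) : (dotv x y)^* = dotv y x.
Proof.
rewrite !dotvE rmorph_sum; apply: eq_bigr => i _.
by rewrite rmorphM /= conjCK mulrC.
Qed.

Lemma dotvDl m (x y z : 'cV[C]_m) : dotv (x + y) z = dotv x z + dotv y z.
Proof. by rewrite !dotvE -big_split; apply: eq_bigr => i _; rewrite !mxE rmorphD mulrDl. Qed.

Lemma dotvDr m (x y z : 'cV[C]_m) : dotv z (x + y) = dotv z x + dotv z y.
Proof. by rewrite !dotvE -big_split; apply: eq_bigr => i _; rewrite !mxE mulrDr. Qed.

Lemma dotvZl m a (x z : 'cV[C]_m) : dotv (a *: x) z = a^* * dotv x z.
Proof. by rewrite !dotvE mulr_sumr; apply: eq_bigr => i _; rewrite !mxE rmorphM mulrA. Qed.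

Lemma dotvZr m a (x z : 'cV[C]_m) : dotv z (a *: x) = a * dotv z x.
Proof. by rewrite !dotvE mulr_sumr; apply: eq_bigr => i _; rewrite !mxE mulrCA. Qed.

Lemma dotvNl m (x z : 'cV[C]_m) : dotv (- x) z = - dotv x z.
Proof. by rewrite -scaleN1r dotvZl rmorphN rmorph1 mulN1r. Qed.

Lemma dotvNr m (x z : 'cV[C]_m) : dotv z (- x) = - dotv z x.
Proof. by rewrite -scaleN1r dotvZr mulN1r. Qed.

Lemma dotv_suml m k (F : 'I_k -> 'cV[C]_m) z :
  dotv (\sum_i F i) z = \sum_i dotv (F i) z.
Proof.
rewrite dotvE; under eq_bigr do rewrite summxE rmorph_sum mulr_suml.
by rewrite exchange_big; apply: eq_bigr => j _; rewrite dotvE.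
Qed.

Lemma dotv_sumr m k (F : 'I_k -> 'cV[C]_m) z :
  dotv z (\sum_i F i) = \sum_i dotv z (F i).
Proof.
rewrite dotvE; under eq_bigr do rewrite summxE mulr_sumr.
by rewrite exchange_big; apply: eq_bigr => j _; rewrite dotvE.
Qed.

Lemma dotv_ge0 m (x : 'cV[C]_m) : 0 <= dotv x x.
Proof. by rewrite dotvE sumr_ge0 // => i _; rewrite mulrC -normCK exprn_ge0. Qed.

Lemma adjK m n (A : 'M[C]_(m, n)) : adj (adj A) = A.
Proof. by apply/matrixP => i j; rewrite !adjE conjCK. Qed.

Lemma adjD m n (A B : 'M[C]_(m, n)) : adj (A + B) = adj A + adj B.
Proof. by apply/matrixP => i j; rewrite [RHS]mxE !adjE mxE rmorphD. Qed.

Lemma adjN m n (A : 'M[C]_(m, n)) : adj (- A) = - adj A.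
Proof. by apply/matrixP => i j; rewrite [RHS]mxE !adjE mxE rmorphN. Qed.

Lemma adj1 m : adj (1%:M : 'M[C]_m) = 1%:M.
Proof.
apply/matrixP => i j; rewrite adjE !mxE eq_sym.
by case: eqP => _; rewrite ?rmorph1 ?rmorph0.
Qed.

Lemma dotv_adj m n (A : 'M[C]_(m, n)) x y : dotv x (A *m y) = dotv (adj A *m x) y.
Proof.
rewrite !dotvE; under eq_bigr do rewrite mxE big_distrr.
rewrite exchange_big; apply: eq_bigr => j _.
rewrite mxE rmorph_sum big_distrl; apply: eq_bigr => i _ /=.
by rewrite adjE rmorphM /= conjCK mulrA [_ * A i j]mulrC.
Qed.

Lemma dotv_adjl m n (A : 'M[C]_(m, n)) x y : dotv (A *m x) y = dotv x (adj A *m y).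
Proof. by rewrite dotv_adj adjK. Qed.

End Adjoint.

Section HermitianForm.
Variable C : numClosedFieldType.

Definition mxform m (M : 'M[C]_m) x y := dotv x (M *m y).

Definition hermmx m (M : 'M[C]_m) := adj M = M.

Definition psdmx m (M : 'M[C]_m) := forall x, 0 <= mxform M x x.

Lemma mxformE m (M : 'M[C]_m) x y :
  mxform M x y = \sum_i \sum_j (x i 0)^* * M i j * y j 0.
Proof.
rewrite /mxform dotvE; apply: eq_bigr => i _; rewrite mxE big_distrr.
by apply: eq_bigr => j _; rewrite /= mulrA.
Qed.

Lemma mxform_delta m (M : 'M[C]_m) i j :
  mxform M (delta_mx i 0) (delta_mx j 0) = M i j.
Proof.
rewrite mxformE (bigD1 i) //= [X in _ + X]big1 => [|k /negPf nki]; last first.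
  by apply: big1 => l _; rewrite !mxE nki rmorph0 !mul0r.
rewrite addr0 (bigD1 j) //= [X in _ + X]big1 => [|l /negPf nlj].
  by rewrite !mxE !eqxx rmorph1 mul1r mulr1 addr0.
by rewrite !mxE nlj mulr0.
Qed.

Lemma mxform1 m (x y : 'cV[C]_m) : mxform 1%:M x y = dotv x y.
Proof. by rewrite /mxform mul1mx. Qed.

Lemma mxformBl m (M : 'M[C]_m) x y z : mxform M (x - y) z = mxform M x z - mxform M y z.
Proof. by rewrite /mxform dotvDl dotvNl. Qed.

Lemma mxformBr m (M : 'M[C]_m) x y z : mxform M z (x - y) = mxform M z x - mxform M z y.
Proof. by rewrite /mxform mulmxBr dotvDr dotvNr. Qed.

Lemma hermmx1 m : hermmx (1%:M : 'M[C]_m).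
Proof. exact: adj1. Qed.

Lemma psdmx1 m : psdmx (1%:M : 'M[C]_m).
Proof. by move=> x; rewrite mxform1 dotv_ge0. Qed.

Lemma real_conj (c : C) : 0 <= c -> c^* = c.
Proof. by move=> c_ge0; rewrite conj_Creal // ger0_real. Qed.

Section CauchySchwarz.
Variables (m : nat) (M : 'M[C]_m).
Hypotheses (M_herm : hermmx M) (M_psd : psdmx M).

Lemma mxform_conj x y : (mxform M x y)^* = mxform M y x.
Proof. by rewrite /mxform dotv_conj dotv_adj M_herm. Qed.

Lemma mxform_combination x y s t :
  mxform M (s *: x + t *: y) (s *: x + t *: y) =
  s^* * s * mxform M x x + s^* * t * mxform M x y
  + t^* * s * (mxform M x y)^* + t^* * t * mxform M y y.
Proof.
rewrite mxform_conj /mxform mulmxDr -!scalemxAr dotvDl !dotvDr !dotvZl !dotvZr.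
ring.
Qed.

(* Positivity of the form at [c x - f^* y], with [c = <y|M y>] and
   [f = <x|M y>], equals [c (<x|M x> c - |f|^2)]. *)
Lemma mxform_CauchySchwarz_nz x y : mxform M y y != 0 ->
  `|mxform M x y| ^+ 2 <= mxform M x x * mxform M y y.
Proof.
move=> nz_c; have c_gt0 : 0 < mxform M y y by rewrite lt_def nz_c M_psd.
have := M_psd (mxform M y y *: x + (- (mxform M x y)^*) *: y).
rewrite mxform_combination real_conj ?M_psd // rmorphN /= conjCK normCK.
set a := mxform M x x; set c := mxform M y y; set f := mxform M x y.
have -> : c * c * a + c * - f^* * f + - f * c * f^* + - f * - f^* * c
        = c * (a * c - f * f^*) by ring.
by rewrite pmulr_rge0 // subr_ge0.
Qed.

Lemma mxform_CauchySchwarz x y :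
  `|mxform M x y| ^+ 2 <= mxform M x x * mxform M y y.
Proof.
have [c0|] := eqVneq (mxform M y y) 0; last exact: mxform_CauchySchwarz_nz.
have [a0|nz_a] := eqVneq (mxform M x x) 0; last first.
  by rewrite mulrC -norm_conjC mxform_conj mxform_CauchySchwarz_nz.
(* Both diagonal values vanish: positivity at [x - f^* y] reads [-2 |f|^2 >= 0]. *)
have := M_psd (1 *: x + (- (mxform M x y)^*) *: y).
rewrite mxform_combination a0 c0 rmorphN /= conjCK rmorph1 normCK mulr0.
set f := mxform M x y.
have -> : 0 + 1 * - f^* * f + - f * 1 * f^* + - f * - f^* * 0 = - (2%:R * (f * f^*))
  by ring.
rewrite mulr0 oppr_ge0 pmulr_rle0 ?ltr0n //.
Qed.

(* Cauchy--Schwarz gives [sqrtC (r eta)]; the weaker [r * sqrtC eta] of the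
   statement follows from [r <= r ^ 2]. *)
Lemma mxform_cross_le x y (r : nat) eta : 0 <= eta ->
  mxform M x x <= 1 -> mxform M y y <= r%:R * eta ->
  `|mxform M x y| <= r%:R * sqrtC eta.
Proof.
move=> eta_ge0 x_le1 y_le.
rewrite -ler_sqr ?nnegrE ?mulr_ge0 ?sqrtC_ge0 ?ler0n // exprMn sqrtCK.
apply: le_trans (mxform_CauchySchwarz x y) _.
apply: le_trans (_ : mxform M y y <= _); first by rewrite ler_piMl ?M_psd.
apply: le_trans y_le _; rewrite ler_wpM2r // -natrX ler_nat.
by case: r => // r; rewrite expnS leq_pmulr.
Qed.

End CauchySchwarz.

Lemma dotv_CauchySchwarz m (x y : 'cV[C]_m) : `|dotv x y| ^+ 2 <= dotv x x * dotv y y.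
Proof. by have := mxform_CauchySchwarz (@hermmx1 m) (@psdmx1 m) x y; rewrite !mxform1. Qed.

Section TraceBound.
Variables (m : nat) (M : 'M[C]_m).
Hypotheses (M_herm : hermmx M) (M_psd : psdmx M).

Lemma psdmx_diag_ge0 i : 0 <= M i i.
Proof. by rewrite -mxform_delta M_psd. Qed.

Lemma psdmx_entry_le i j : `|M i j| <= sqrtC (M i i) * sqrtC (M j j).
Proof.
rewrite -ler_sqr ?nnegrE ?mulr_ge0 ?sqrtC_ge0 ?psdmx_diag_ge0 // exprMn !sqrtCK.
by rewrite -!mxform_delta mxform_CauchySchwarz.
Qed.

(* With [s i = sqrt (M i i)], the form is bounded by [(\sum_i |x i| s i)^2],
   and Cauchy--Schwarz for the vectors [(|x i|)_i] and [(s i)_i] concludes. *)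
Lemma mxform_le_tr x : mxform M x x <= \tr M * dotv x x.
Proof.
pose s i := sqrtC (M i i).
have s_ge0 i : 0 <= s i by rewrite sqrtC_ge0 psdmx_diag_ge0.
pose X : 'cV[C]_m := \col_i `|x i 0|.
pose S : 'cV[C]_m := \col_i s i.
have XSE : dotv X S = \sum_i `|x i 0| * s i.
  by rewrite dotvE; apply: eq_bigr => i _; rewrite !mxE real_conj.
have XS_ge0 : 0 <= dotv X S by rewrite XSE sumr_ge0 // => i _; rewrite mulr_ge0.
have XXE : dotv X X = dotv x x.
  rewrite !dotvE; apply: eq_bigr => i _; rewrite !mxE real_conj //.
  by rewrite -expr2 normCK mulrC.
have SSE : dotv S S = \tr M.
  rewrite dotvE /mxtrace; apply: eq_bigr => i _; rewrite !mxE real_conj //.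
  by rewrite -expr2 sqrtCK.
apply: le_trans (_ : dotv X S ^+ 2 <= _); last first.
  by rewrite -{1}(ger0_norm XS_ge0) mulrC -XXE -SSE dotv_CauchySchwarz.
rewrite -(ger0_norm (M_psd x)) mxformE expr2 {1}XSE mulr_suml.
apply: le_trans (ler_norm_sum _ _ _) _; apply: ler_sum => i _.
rewrite XSE mulr_sumr; apply: le_trans (ler_norm_sum _ _ _) _.
apply: ler_sum => j _; rewrite !normrM norm_conjC mulrAC mulrACA.
by rewrite ler_wpM2l ?mulr_ge0 // psdmx_entry_le.
Qed.

End TraceBound.

Definition gram m k (M : 'M[C]_m) (w : 'I_k -> 'cV[C]_m) : 'M[C]_k :=
  \matrix_(i, j) mxform M (w i) (w j).

Lemma mxform_sum_gram m k (M : 'M[C]_m) (w : 'I_k -> 'cV[C]_m) (c d : 'I_k -> C) :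
  mxform M (\sum_i c i *: w i) (\sum_j d j *: w j) =
  mxform (gram M w) (\col_i c i) (\col_j d j).
Proof.
rewrite [RHS]mxformE /mxform dotv_suml; apply: eq_bigr => i _.
rewrite mulmx_sumr dotv_sumr; apply: eq_bigr => j _.
by rewrite -scalemxAr dotvZl dotvZr !mxE /mxform [RHS]mulrAC -mulrA.
Qed.

Lemma gram_herm m k (M : 'M[C]_m) (w : 'I_k -> 'cV[C]_m) :
  hermmx M -> hermmx (gram M w).
Proof. by move=> M_herm; apply/matrixP => i j; rewrite adjE !mxE mxform_conj. Qed.

Lemma gram_psd m k (M : 'M[C]_m) (w : 'I_k -> 'cV[C]_m) :
  psdmx M -> psdmx (gram M w).
Proof.
move=> M_psd z.
have -> : z = \col_i z i 0 by apply/matrixP => i j; rewrite !mxE ord1.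
by rewrite -mxform_sum_gram M_psd.
Qed.

Lemma mxform_sum_le m k (M : 'M[C]_m) (w : 'I_k -> 'cV[C]_m) (c : 'I_k -> C) :
  hermmx M -> psdmx M ->
  mxform M (\sum_i c i *: w i) (\sum_i c i *: w i) <=
  (\sum_i mxform M (w i) (w i)) * dotv (\col_i c i) (\col_i c i).
Proof.
move=> M_herm M_psd; rewrite mxform_sum_gram.
have -> : \sum_i mxform M (w i) (w i) = \tr (gram M w).
  by rewrite /mxtrace; apply: eq_bigr => i _; rewrite mxE.
exact: mxform_le_tr (gram_herm w M_herm) (gram_psd w M_psd) _.
Qed.

End HermitianForm.

Section PartialTrace.
Variable C : numClosedFieldType.

Lemma sum_mxtens_index m n (F : 'I_(m * n) -> C) :
  \sum_I F I = \sum_i \sum_j F (mxtens_index (i, j)).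
Proof.
rewrite pair_big (reindex (@mxtens_index m n)) /=; first by apply: eq_bigr => -[i j].
by exists (@mxtens_unindex m n) => k _; rewrite (mxtens_indexK, mxtens_unindexK).
Qed.

Lemma tensmx_colE m n (x : 'cV[C]_m) (y : 'cV[C]_n) i j k :
  (x *t y) (mxtens_index (i, j)) k = x i 0 * y j 0.
Proof. by case: (mxtens_indexP k) => a b; rewrite tensmxE !ord1. Qed.

Lemma dotv_tensmx m n (x x' : 'cV[C]_m) (y y' : 'cV[C]_n) :
  dotv (x *t y) (x' *t y') = dotv x x' * dotv y y'.
Proof.
rewrite dotvE sum_mxtens_index !dotvE mulr_suml; apply: eq_bigr => i _.
rewrite mulr_sumr; apply: eq_bigr => j _.
by rewrite !tensmx_colE rmorphM /=; ring.
Qed.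

Lemma adj_tensmx m n p q (A : 'M[C]_(m, n)) (B : 'M[C]_(p, q)) :
  adj (A *t B) = adj A *t adj B.
Proof.
apply/matrixP => I J.
case: (mxtens_indexP I) => i k; case: (mxtens_indexP J) => j l.
by rewrite adjE !tensmxE !adjE rmorphM.
Qed.

Lemma tensmxBl m n p q (A B : 'M[C]_(m, n)) (D : 'M[C]_(p, q)) :
  (A - B) *t D = A *t D - B *t D.
Proof.
apply/matrixP => I J.
case: (mxtens_indexP I) => i k; case: (mxtens_indexP J) => j l.
by rewrite [RHS]mxE !tensmxE [in RHS]mxE tensmxE mxE [in LHS]mxE mulrBl.
Qed.

Lemma mulmx_tensmx1 m n (A : 'M[C]_m) (x : 'cV[C]_m) (y : 'cV[C]_n) :
  (A *t (1%:M : 'M[C]_n)) *m (x *t y) = (A *m x) *t y.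
Proof. by rewrite tensmx_mul mul1mx. Qed.

Lemma tensmx11 m n : (1%:M : 'M[C]_m) *t (1%:M : 'M[C]_n) = 1%:M.
Proof.
apply/matrixP => I J.
case: (mxtens_indexP I) => i k; case: (mxtens_indexP J) => j l.
rewrite tensmxE !mxE (can_eq (@mxtens_indexK m n)) xpair_eqE.
by rewrite -natrM mulnb.
Qed.

Lemma tensmx_sum_delta m n (x : 'cV[C]_m) (v : 'cV[C]_n) :
  x *t v = \sum_j v j 0 *: (x *t (delta_mx j 0 : 'cV[C]_n)).
Proof.
apply/matrixP => I J.
case: (mxtens_indexP I) => i k; rewrite summxE tensmx_colE.
rewrite (bigD1 k) //= big1 => [|l nlk]; last first.
  by rewrite mxE tensmx_colE mxE eq_sym (negPf nlk) mulr0 mulr0.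
by rewrite mxE tensmx_colE mxE !eqxx mulr1 addr0 mulrC.
Qed.

Lemma mulmx_tensmx_delta m n p (A : 'M[C]_(p, m * n)) (x : 'cV[C]_m) (j : 'I_n) I :
  (A *m (x *t (delta_mx j 0 : 'cV[C]_n))) I 0 = \sum_i A I (mxtens_index (i, j)) * x i 0.
Proof.
rewrite mxE sum_mxtens_index; apply: eq_bigr => i _.
rewrite (bigD1 j) //= big1 => [|k /negPf nkj]; last by rewrite tensmx_colE mxE nkj !mulr0.
by rewrite tensmx_colE !mxE !eqxx mulr1 addr0.
Qed.

Lemma dotv_tensmx_delta m n (x : 'cV[C]_m) (j : 'I_n) (y : 'cV[C]_(m * n)) :
  dotv (x *t (delta_mx j 0 : 'cV[C]_n)) y = \sum_i (x i 0)^* * y (mxtens_index (i, j)) 0.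
Proof.
rewrite -dotv_conj /dotv mulmx_tensmx_delta rmorph_sum; apply: eq_bigr => i _.
by rewrite adjE rmorphM /= conjCK mulrC.
Qed.

Lemma ptraceB_form m n (rho : 'M[C]_(m * n)) (x : 'cV[C]_m) :
  mxform (ptraceB rho) x x =
  \sum_j mxform rho (x *t (delta_mx j 0 : 'cV[C]_n)) (x *t (delta_mx j 0 : 'cV[C]_n)).
Proof.
rewrite mxformE; under [RHS]eq_bigr do rewrite /mxform dotv_tensmx_delta.
rewrite [RHS]exchange_big; apply: eq_bigr => i _.
under [RHS]eq_bigr do rewrite mulmx_tensmx_delta mulr_sumr.
rewrite [RHS]exchange_big; apply: eq_bigr => j _.
by rewrite mxE mulr_sumr mulr_suml; apply: eq_bigr => k _; rewrite mulrA.
Qed.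

Lemma ptraceB_psd m n (rho : 'M[C]_(m * n)) : psdmx rho -> psdmx (ptraceB rho).
Proof. by move=> rho_psd x; rewrite ptraceB_form sumr_ge0. Qed.

Lemma mxform_tensmx_le_ptraceB m n (rho : 'M[C]_(m * n)) (x : 'cV[C]_m) (v : 'cV[C]_n) :
  hermmx rho -> psdmx rho -> dotv v v = 1 ->
  mxform rho (x *t v) (x *t v) <= mxform (ptraceB rho) x x.
Proof.
move=> rho_herm rho_psd v_unit; rewrite tensmx_sum_delta ptraceB_form.
apply: le_trans (mxform_sum_le _ _ rho_herm rho_psd) _.
have -> : \col_j v j 0 = v by apply/matrixP => i j; rewrite mxE ord1.
by rewrite v_unit mulr1.
Qed.

End PartialTrace.

Section QuantumBounds.
Variable C : numClosedFieldType.

Lemma dotv_orth_proj_le m (P : 'M[C]_m) x :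
  is_orth_proj P -> dotv (P *m x) (P *m x) <= dotv x x.
Proof.
move=> [PP P_herm].
have PxxE : dotv (P *m x) x = dotv (P *m x) (P *m x).
  by rewrite [RHS]dotv_adjl P_herm mulmxA PP dotv_adjl P_herm.
have xPxE : dotv x (P *m x) = dotv (P *m x) (P *m x).
  by rewrite -dotv_conj PxxE -[RHS]real_conj ?dotv_ge0.
rewrite -subr_ge0; have := dotv_ge0 (x - P *m x).
by rewrite dotvDl !dotvDr !dotvNl !dotvNr PxxE xPxE opprK addrA subrK.
Qed.

Lemma orth_proj_tensmx1 m n (P : 'M[C]_m) :
  is_orth_proj P -> is_orth_proj (P *t (1%:M : 'M[C]_n)).
Proof.
move=> [PP P_herm]; split; first by rewrite tensmx_mul PP mul1mx.
by rewrite adj_tensmx P_herm adj1.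
Qed.

Lemma density_form_le m (rho : 'M[C]_m) x : is_density rho -> mxform rho x x <= dotv x x.
Proof. by case=> rho_herm rho_psd rho_tr; rewrite -[X in _ <= X]mul1r -rho_tr mxform_le_tr. Qed.

Lemma expect_sandwich m (M X : 'M[C]_m) phi :
  hermmx X -> expect phi (X *m M *m X) = mxform M (X *m phi) (X *m phi).
Proof. by move=> X_herm; rewrite /expect /mxform -!mulmxA dotv_adj X_herm. Qed.

Lemma orthonormal_tensmx m n s (u : 'I_s -> 'cV[C]_m) (v : 'I_s -> 'cV[C]_n) :
  orthonormal_family u -> orthonormal_family v ->
  orthonormal_family (fun k => u k *t v k).
Proof. by move=> u_on v_on i j; rewrite dotv_tensmx u_on v_on -natrM mulnb andbb. Qed.

Lemma dotv_orthonormal_sum m s (w : 'I_s -> 'cV[C]_m) (c : 'I_s -> C) :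
  orthonormal_family w ->
  dotv (\sum_i c i *: w i) (\sum_i c i *: w i) = dotv (\col_i c i) (\col_i c i).
Proof.
move=> w_on; rewrite -!mxform1 mxform_sum_gram; congr mxform.
by apply/matrixP => i j; rewrite !mxE mxform1 w_on.
Qed.

Lemma opnorm_form_le m (X : 'M[C]_m) eta u :
  opnorm_le X eta -> dotv u u = 1 -> 0 <= dotv u (X *m u) -> dotv u (X *m u) <= eta.
Proof.
move=> X_le u_unit form_ge0.
have := X_le u; rewrite /vnorm u_unit sqrtC1 mulr1 => Xu_le.
have eta_ge0 : 0 <= eta by apply: le_trans Xu_le; rewrite sqrtC_ge0 dotv_ge0.
rewrite -(ger0_norm form_ge0) -ler_sqr ?nnegrE //.
apply: le_trans (dotv_CauchySchwarz _ _) _.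
by rewrite u_unit mul1r -(sqrtCK (dotv _ _)) ler_sqr ?nnegrE ?sqrtC_ge0 ?dotv_ge0.
Qed.

Lemma tensmx_form_le m n (rho : 'M[C]_(m * n)) (Q : 'M[C]_m) eta u (v : 'cV[C]_n) :
  hermmx rho -> psdmx rho -> hermmx Q -> opnorm_le (Q *m ptraceB rho *m Q) eta ->
  dotv u u = 1 -> dotv v v = 1 ->
  mxform rho ((Q *m u) *t v) ((Q *m u) *t v) <= eta.
Proof.
move=> rho_herm rho_psd Q_herm Q_le u_unit v_unit.
apply: le_trans (mxform_tensmx_le_ptraceB _ rho_herm rho_psd v_unit) _.
have formE : mxform (ptraceB rho) (Q *m u) (Q *m u) = dotv u ((Q *m ptraceB rho *m Q) *m u).
  by rewrite /mxform dotv_adjl Q_herm !mulmxA.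
by rewrite formE opnorm_form_le // -formE ptraceB_psd.
Qed.

Lemma schmidt_form_le m n r (rho : 'M[C]_(m * n)) phi (Q : 'M[C]_m) eta :
  hermmx rho -> psdmx rho -> is_pure_state phi -> schmidt_rank_le phi r ->
  hermmx Q -> 0 <= eta -> opnorm_le (Q *m ptraceB rho *m Q) eta ->
  mxform rho ((Q *t 1%:M) *m phi) ((Q *t 1%:M) *m phi) <= r%:R * eta.
Proof.
move=> rho_herm rho_psd phi_unit [s [s_le_r [lam [u [v [_ u_on v_on phiE]]]]]].
move=> Q_herm eta_ge0 Q_le.
have lam_unit : dotv (\col_k lam k) (\col_k lam k) = 1.
  by rewrite -(dotv_orthonormal_sum _ (orthonormal_tensmx u_on v_on)) -phiE.
have -> : (Q *t 1%:M) *m phi = \sum_k lam k *: ((Q *m u k) *t v k).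
  rewrite phiE mulmx_sumr; apply: eq_bigr => k _.
  by rewrite -scalemxAr mulmx_tensmx1.
apply: le_trans (mxform_sum_le _ _ rho_herm rho_psd) _.
rewrite lam_unit mulr1; apply: le_trans (_ : \sum_(k < s) eta <= _).
  by apply: ler_sum => k _; rewrite tensmx_form_le ?u_on ?v_on ?eqxx.
by rewrite sumr_const card_ord -[eta *+ s]mulr_natl ler_wpM2r // ler_nat.
Qed.

End QuantumBounds.

Unset Implicit Arguments.

Theorem lemmaB11 (C : numClosedFieldType) (m n r : nat) (rho : 'M[C]_(m * n)) (phi : 'cV[C]_(m * n))
    (P : 'M[C]_m) (eta : C) :
  is_density rho ->
  is_pure_state phi ->
  schmidt_rank_le phi r ->
  is_orth_proj P ->
  0 <= eta ->
  opnorm_le ((1%:M - P) *m ptraceB rho *m (1%:M - P)) eta ->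
  `| expect phi ((P *t (1%:M : 'M[C]_n)) *m rho *m (P *t (1%:M : 'M[C]_n)))
     - expect phi rho | <= 2 * r%:R * sqrtC eta.
Proof.
move=> rho_dens phi_unit phi_rank P_proj eta_ge0 Q_le.
have [rho_herm rho_psd _] := rho_dens.
have Pt_proj := orth_proj_tensmx1 n P_proj.
set Pt := P *t 1%:M in Pt_proj *; set a := Pt *m phi.
have a_le1 : mxform rho a a <= 1.
  by rewrite -phi_unit (le_trans (density_form_le _ rho_dens)) ?dotv_orth_proj_le.
have phi_le1 : mxform rho phi phi <= 1 by rewrite -phi_unit density_form_le.
have Q_herm : hermmx (1%:M - P) by rewrite /hermmx adjD adjN adj1 P_proj.2.
have b_le : mxform rho (phi - a) (phi - a) <= r%:R * eta.
  have -> : phi - a = ((1%:M - P) *t 1%:M) *m phi by rewrite tensmxBl tensmx11 mulmxBl mul1mx.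
  exact: schmidt_form_le.
rewrite expect_sandwich; last exact: Pt_proj.2.
rewrite -/a; change (expect phi rho) with (mxform rho phi phi).
have -> : mxform rho a a - mxform rho phi phi = - (mxform rho a (phi - a) + mxform rho (phi - a) phi)
  by rewrite mxformBl mxformBr; ring.
rewrite normrN -mulrA mulr_natl mulr2n; apply: le_trans (ler_normD _ _) (lerD _ _).
  exact: mxform_cross_le.
by rewrite -norm_conjC mxform_conj // mxform_cross_le.
Qed.
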